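(* For all integers $n,k,j\ge 0$, \[ \sum_{i=0}^n e_{n,i}^k \binom{n+j-i}{n} = (j+k+1)^n . \]
   Context: For a fixed integer parameter $k$, the numbers $e^k_{n,i}$ are defined by $e^k_{0,0}=1$, $e^k_{n,i}=0$ whenever $i<0$ or $i>n$, and $e^k_{n,i}=(k+i+1)\,e^k_{n-1,i}+(n-k-i)\,e^k_{n-1,i-1}$ for all other integers $n,i$. Binomial coefficients $\binom{a}{n}$ with $0\le a<n$ are $0$. *)

From mathcomp Require Import all_boot all_order all_algebra.
Set Implicit Arguments. Unset Strict Implicit. Unset Printing Implicit Defensive.
Import Order.TTheory GRing.Theory Num.Theory.
Local Open Scope ring_scope.

(* e k n i = e^k_{n,i} (integer valued), for a parameter k : nat and indices
   n, i : nat.  e^k_{0,0} = 1, e^k_{n,i} = 0 for i > n (negative i never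
   arises since i : nat; the term e_{n-1,i-1} with i = 0 is taken as 0), and
   e^k_{n,i} = (k+i+1) e^k_{n-1,i} + (n-k-i) e^k_{n-1,i-1} otherwise. *)
Fixpoint e (k : nat) (n i : nat) {struct n} : int :=
  match n with
  | 0%N => if i == 0%N then 1 else 0
  | n'.+1 =>
      if (n'.+1 < i)%N then 0 else
      (k + i + 1)%:Z * e k n' i
      + ((n'.+1)%:Z - k%:Z - i%:Z) * (match i with 0%N => 0 | i'.+1 => e k n' i' end)
  end.

From mathcomp Require Import all_boot all_order all_algebra.
From mathcomp Require Import zify ring.
Import Order.TTheory GRing.Theory Num.Theory.
Local Open Scope ring_scope.

(* Feeding the recurrence for e^k_{n+1,i} into the sum and
   shifting the index of its second part leaves, against each e^k_{n,i}, the
   weight (k+i+1) C(m+1,n+1) + (n-k-i) C(m,n+1) with m = n+j-i.  Pascal's rule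
   and (n+1) C(m,n+1) = (m-n) C(m,n) collapse it to (j+k+1) C(m,n), so the
   sum for n+1 is (j+k+1) times the sum for n. *)

Lemma e_small k n i : (n < i)%N -> e k n i = 0.
Proof. by case: n => [|n] /= lt_ni; [case: i lt_ni | rewrite lt_ni]. Qed.

Lemma eS k n i :
  e k n.+1 i = (k + i + 1)%:Z * e k n i
             + ((n.+1)%:Z - k%:Z - i%:Z) * (if i is i'.+1 then e k n i' else 0).
Proof.
rewrite /=; case: ltnP => // lt_n1i.
by case: i lt_n1i => [|i] lt_n1i; rewrite !e_small ?mulr0 ?addr0 //; lia.
Qed.

Lemma mul_bin_leftz m n :
  (n.+1)%:Z * 'C(m, n.+1)%:Z = (m%:Z - n%:Z) * 'C(m, n)%:Z.
Proof.
case: (leqP n m) => [le_nm | lt_mn].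
  by rewrite -PoszM mul_bin_left PoszM subzn.
by rewrite (bin_small lt_mn) bin_small ?mulr0 // ltnW.
Qed.

Lemma bin_weighted_pascal a m n :
  (a.+1)%:Z * 'C(m.+1, n.+1)%:Z + (n%:Z - a%:Z) * 'C(m, n.+1)%:Z
  = ((a.+1)%:Z + m%:Z - n%:Z) * 'C(m, n)%:Z.
Proof.
rewrite binS.
transitivity ((a.+1)%:Z * 'C(m, n)%:Z + (n.+1)%:Z * 'C(m, n.+1)%:Z); first ring.
by rewrite mul_bin_leftz; ring.
Qed.

Lemma bin_weight_shift k j n i : (i <= n)%N ->
  (k + i + 1)%:Z * 'C(n.+1 + j - i, n.+1)%:Z
  + ((n.+1)%:Z - k%:Z - (i.+1)%:Z) * 'C(n.+1 + j - i.+1, n.+1)%:Z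
  = (j + k + 1)%:Z * 'C(n + j - i, n)%:Z.
Proof.
move=> le_in.
have -> : (n.+1 + j - i = (n + j - i).+1)%N by lia.
have -> : (n.+1 + j - i.+1 = n + j - i)%N by lia.
have -> : (n.+1)%:Z - k%:Z - (i.+1)%:Z = n%:Z - (k + i)%N%:Z
  by ring.
have -> : (j + k + 1)%N%:Z = ((k + i).+1)%:Z + (n + j - i)%N%:Z - n%:Z.
  by rewrite -(@subzn (n + j) i); [ring | lia].
by rewrite -bin_weighted_pascal addn1.
Qed.

Theorem corollary2p4 (n k j : nat) :
  \sum_(0 <= i < n.+1) e k n i * ('C(n + j - i, n))%:Z = ((j + k + 1) ^ n)%N%:Z.
Proof.
elim: n => [|n IH]; first by rewrite big_nat1 /= add0n subn0 bin0.
under eq_big_nat => i _ do rewrite eS mulrDl.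
rewrite big_split /= big_nat_recr //= e_small // mulr0 mul0r addr0.
rewrite [X in _ + X]big_nat_recl //= mulr0 mul0r add0r -big_split /=.
rewrite expnS PoszM -IH mulr_sumr.
apply: eq_big_nat => i /andP[_ lt_in].
by rewrite mulrCA -bin_weight_shift //; ring.
Qed.
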